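(* Let $S,T$ be two symmetric scoring functions on $\mathcal{A}^*\times\mathcal{A}^*$. If $\max_{(x,y)\in\mathrm{SET}_{S,T}}x$ has a unique maximiser $(x_0,y_0)$, then $$\max_{\pi\in\nu^*_{n,S}}\frac{T_\pi(X_{[1,n]},Y_{[1,n]})}{n}\to y_0\quad\text{and}\quad\min_{\pi\in\nu^*_{n,S}}\frac{T_\pi(X_{[1,n]},Y_{[1,n]})}{n}\to y_0\quad\text{almost surely as }n\to\infty.$$
   Context: $\mathcal{A}$ finite alphabet, $\mathcal{A}^*=\mathcal{A}\cup\{G\}$ with gap symbol $G$. A symmetric scoring function is $R:\mathcal{A}^*\times\mathcal{A}^*\to\mathbb{R}$ with $R(a,b)=R(b,a)$, $R(G,G)=0$. An alignment of $x_{[1,n]},y_{[1,n]}$ is a pair of increasing sequences $1\le i_1<\dots<i_k\le n$, $1\le j_1<\dots<j_k\le n$; $\Lambda_n$ is the set of them; its score is $R_\nu(x_{[1,n]},y_{[1,n]})=\sum_{\ell}R(x_{i_\ell},y_{j_\ell})+\sum_{i\notin\{i_\ell\}}R(x_i,G)+\sum_{j\notin\{j_\ell\}}R(G,y_j)$. $X_1,X_2,\dots,Y_1,Y_2,\dots$ are i.i.d. random letters from a fixed distribution on $\mathcal{A}$; $L_{n,R}=\max_{\nu\in\Lambda_n}R_\nu(X_{[1,n]},Y_{[1,n]})$, and $\nu^*_{n,R}$ is the random set of $\nu\in\Lambda_n$ attaining this maximum; $\lambda_R$ is the a.s. limit of $L_{n,R}/n$. $\mathrm{SET}_{S,T}=\{(x,y):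 ax+by\le\lambda_{aS+bT}\ \forall(a,b)\in\mathbb{R}^2\}$, the a.s. Hausdorff limit of the closed convex hulls of $\{(S_\nu/n,T_\nu/n):\nu\in\Lambda_n\}$. *)

From Stdlib Require Import Reals List Arith.
Import ListNotations.
Open Scope R_scope.

(* A^* = option A, with None playing the role of the gap symbol G. *)
Definition scoring (A : Type) := option A -> option A -> R.

Definition symmetric_scoring {A : Type} (Rs : scoring A) : Prop :=
  (forall u v, Rs u v = Rs v u) /\ Rs None None = 0.

Definition finite_alphabet {A : Type} (enumA : list A) : Prop :=
  NoDup enumA /\ forall a, In a enumA.

Definition sumR (l : list R) : R := fold_right Rplus 0 l.
Definition prodR (l : list R) : R := fold_right Rmult 1 l.

(* An alignment (i_1,j_1),...,(i_k,j_k) with 1<=i_1<...<i_k<=n, 1<=j_1<...<j_k<=n. *)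
Definition alignment := list (nat * nat).

Fixpoint sublists {T : Type} (l : list T) : list (list T) :=
  match l with
  | [] => [[]]
  | h :: t => let s := sublists t in map (cons h) s ++ s
  end.

Fixpoint increasing_pairs (nu : alignment) : bool :=
  match nu with
  | [] => true
  | (i, j) :: t =>
      match t with
      | [] => true
      | (i', j') :: _ => Nat.ltb i i' && Nat.ltb j j' && increasing_pairs t
      end
  end.

Definition all_pairs (n : nat) : list (nat * nat) :=
  flat_map (fun i => map (fun j => (i, j)) (seq 1 n)) (seq 1 n).

Definition alignments (n : nat) : list alignment :=
  filter increasing_pairs (sublists (all_pairs n)).

Definition score {A : Type} (Rs : scoring A) (n : nat) (x y : nat -> A)
    (nu : alignment) : R :=
  sumR (map (fun ij => Rs (Some (x (fst ij))) (Some (y (snd ij)))) nu)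
  + sumR (map (fun i => if existsb (Nat.eqb i) (map fst nu) then 0
                        else Rs (Some (x i)) None) (seq 1 n))
  + sumR (map (fun j => if existsb (Nat.eqb j) (map snd nu) then 0
                        else Rs None (Some (y j))) (seq 1 n)).

Definition list_max (l : list R) : R :=
  match l with [] => 0 | h :: t => fold_right Rmax h t end.
Definition list_min (l : list R) : R :=
  match l with [] => 0 | h :: t => fold_right Rmin h t end.

Definition L_opt {A : Type} (Rs : scoring A) (n : nat) (x y : nat -> A) : R :=
  list_max (map (score Rs n x y) (alignments n)).

Definition opt_alignments {A : Type} (Rs : scoring A) (n : nat) (x y : nat -> A)
    : list alignment :=
  filter (fun nu => if Req_EM_T (score Rs n x y nu) (L_opt Rs n x y) then true else false)
         (alignments n).

Definition max_T_over_opt {A : Type} (S T : scoring A) (n : nat) (x y : nat -> A) : R :=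
  list_max (map (fun pi => score T n x y pi / INR n) (opt_alignments S n x y)).
Definition min_T_over_opt {A : Type} (S T : scoring A) (n : nat) (x y : nat -> A) : R :=
  list_min (map (fun pi => score T n x y pi / INR n) (opt_alignments S n x y)).

Definition sigma_algebra {Omega : Type} (F : (Omega -> Prop) -> Prop) : Prop :=
  F (fun _ => True)
  /\ (forall E, F E -> F (fun w => ~ E w))
  /\ (forall E : nat -> Omega -> Prop, (forall k, F (E k)) ->
        F (fun w => exists k, E k w)).

Definition probability_measure {Omega : Type} (F : (Omega -> Prop) -> Prop)
    (P : (Omega -> Prop) -> R) : Prop :=
  (forall E, F E -> 0 <= P E)
  /\ P (fun _ => True) = 1
  /\ (forall E : nat -> Omega -> Prop,
        (forall k, F (E k)) ->
        (forall k l w, k <> l -> E k w -> E l w -> False) ->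
        Un_cv (fun N => sum_f_R0 (fun k => P (E k)) N) (P (fun w => exists k, E k w))).

Definition almost_surely {Omega : Type} (F : (Omega -> Prop) -> Prop)
    (P : (Omega -> Prop) -> R) (Q : Omega -> Prop) : Prop :=
  exists E, F E /\ P E = 1 /\ forall w, E w -> Q w.

Definition distribution {A : Type} (enumA : list A) (p : A -> R) : Prop :=
  (forall a, 0 <= p a) /\ sumR (map p enumA) = 1.

(* X_1, X_2, ..., Y_1, Y_2, ... are i.i.d. with law p (index 0 unused):
   the events {X_i = a} are measurable and every finite-dimensional
   distribution is the product one. *)
Definition iid_letters {A Omega : Type} (F : (Omega -> Prop) -> Prop)
    (P : (Omega -> Prop) -> R) (p : A -> R) (X Y : nat -> Omega -> A) : Prop :=
  (forall i a, F (fun w => X i w = a))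
  /\ (forall i a, F (fun w => Y i w = a))
  /\ (forall (n : nat) (a b : nat -> A),
        P (fun w => forall i, (1 <= i <= n)%nat -> X i w = a i /\ Y i w = b i)
        = prodR (map (fun i => p (a i) * p (b i)) (seq 1 n))).

Definition is_lambda {A Omega : Type} (F : (Omega -> Prop) -> Prop)
    (P : (Omega -> Prop) -> R) (X Y : nat -> Omega -> A) (lam : scoring A -> R) : Prop :=
  forall Rs : scoring A, symmetric_scoring Rs ->
    almost_surely F P (fun w =>
      Un_cv (fun n => L_opt Rs n (fun i => X i w) (fun i => Y i w) / INR n) (lam Rs)).

Definition SET {A : Type} (lam : scoring A -> R) (S T : scoring A) (x y : R) : Prop :=
  forall a b : R, a * x + b * y <= lam (fun u v => a * S u v + b * T u v).

From Pilot Require Import Defs.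
From Stdlib Require Import Reals List Lra Lia Classical FunctionalExtensionality
  PropExtensionality ClassicalEpsilon.
Import ListNotations.
(* Re-import so that [list_max] and [list_min] mean the [Defs] ones, not [List]'s. *)
Import Defs.
Open Scope R_scope.

(* The function [g t = lam (S + t T)] is convex, since [lam] is a.s. the limit of the
   sublinear functional [R |-> L_{n,R} / n].  The slope [D] of a supporting line of [g]
   at [0] gives the point [(g 0, D)] of [SET_{S,T}], whose first coordinate is maximal,
   so uniqueness of the maximiser forces [D = y0]: [g] is differentiable at [0] with
   derivative [y0].  For an [S]-optimal alignment [pi] and [d > 0], comparing with the
   scorings [S +- d T] gives
     [(L_{n,S} - L_{n,S-dT}) / d <= T_pi <= (L_{n,S+dT} - L_{n,S}) / d],
   and dividing by [n], letting [n -> oo] and then [d -> 0] squeezes [T_pi / n] to [y0]. *)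

Lemma pred_ext {Omega : Type} (E E' : Omega -> Prop) :
  (forall w, E w <-> E' w) -> E = E'.
Proof.
  intros H; apply functional_extensionality; intros w.
  apply propositional_extensionality; auto.
Qed.

Lemma Un_cv_eventually_eq (u : nat -> R) (c : R) (N : nat) :
  (forall n, (N <= n)%nat -> u n = c) -> Un_cv u c.
Proof.
  intros H e He; exists N; intros n Hn.
  rewrite H by lia; unfold Rdist; rewrite Rminus_diag, Rabs_R0; lra.
Qed.

Lemma Un_cv_const (c : R) : Un_cv (fun _ => c) c.
Proof. apply (Un_cv_eventually_eq _ _ 0); auto. Qed.

Section Probability.

Context {Omega : Type} (F : (Omega -> Prop) -> Prop) (P : (Omega -> Prop) -> R).
Hypotheses (HF : sigma_algebra F) (HP : probability_measure F P).

Lemma measurable_ext (E E' : Omega -> Prop) :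
  F E -> (forall w, E w <-> E' w) -> F E'.
Proof. intros HE Heq; rewrite <- (pred_ext E E' Heq); auto. Qed.

Lemma measurable_not (E : Omega -> Prop) : F E -> F (fun w => ~ E w).
Proof. apply HF. Qed.

Lemma measurable_or (E E' : Omega -> Prop) : F E -> F E' -> F (fun w => E w \/ E' w).
Proof.
  intros HE HE'.
  apply (measurable_ext (fun w => exists k, (if Nat.eqb k 0 then E else E') w)).
  - apply HF; intros [|k]; auto.
  - intros w; split.
    + intros [[|k] Hk]; auto.
    + intros [Hw|Hw]; [exists 0%nat | exists 1%nat]; auto.
Qed.

Lemma measurable_and (E E' : Omega -> Prop) : F E -> F E' -> F (fun w => E w /\ E' w).
Proof.
  intros HE HE'.
  apply (measurable_ext (fun w => ~ (~ E w \/ ~ E' w))); [|intros w; tauto].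
  apply measurable_not, measurable_or; apply measurable_not; auto.
Qed.

Lemma measurable_False : F (fun _ => False).
Proof.
  apply (measurable_ext (fun _ => ~ True)); [apply measurable_not, HF | tauto].
Qed.

Lemma measurable_forall_lt (E : nat -> Omega -> Prop) (k : nat) :
  (forall j, F (E j)) -> F (fun w => forall j, (j < k)%nat -> E j w).
Proof.
  intros HE; induction k as [|k IH].
  - apply (measurable_ext (fun _ => True)); [apply HF | split; auto; lia].
  - apply (measurable_ext (fun w => (forall j, (j < k)%nat -> E j w) /\ E k w)).
    + apply measurable_and; auto.
    + intros w; split.
      * intros [Hlt Hk] j Hj; destruct (Nat.eq_dec j k); subst; auto; apply Hlt; lia.
      * intros H; split; auto.
Qed.

Lemma prob_ext (E E' : Omega -> Prop) : (forall w, E w <-> E' w) -> P E = P E'.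
Proof. intros Heq; rewrite (pred_ext E E' Heq); auto. Qed.

(* Countable additivity for the constant family [False] makes the partial
   sums [(N+1) P False] converge, so consecutive differences force [P False = 0]. *)
Lemma prob_False : P (fun _ => False) = 0.
Proof.
  destruct HP as [_ [_ Hadd]].
  set (c := P (fun _ => False)).
  assert (Hc := Hadd (fun _ _ => False) (fun _ => measurable_False) (fun _ _ _ _ H _ => H)).
  rewrite (prob_ext _ (fun _ => False)) in Hc by firstorder.
  fold c in Hc.
  assert (Hdiff : Un_cv (fun N => sum_f_R0 (fun _ => c) (S N) - sum_f_R0 (fun _ => c) N)
                        (c - c)).
  { apply CV_minus; auto.
    intros e He; destruct (Hc e He) as [N HN]; exists N; intros n Hn; apply HN; lia. }
  assert (Hconst : Un_cv (fun N => sum_f_R0 (fun _ => c) (S N) - sum_f_R0 (fun _ => c) N) c).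
  { apply (Un_cv_eventually_eq _ _ 0); intros n _; simpl; ring. }
  pose proof (UL_sequence _ _ _ Hdiff Hconst); lra.
Qed.

Lemma prob_or_disjoint (E E' : Omega -> Prop) :
  F E -> F E' -> (forall w, E w -> E' w -> False) ->
  P (fun w => E w \/ E' w) = P E + P E'.
Proof.
  intros HE HE' Hdisj.
  destruct HP as [_ [_ Hadd]].
  set (D := fun k : nat => match k with 0%nat => E | 1%nat => E' | _ => fun _ => False end).
  assert (HD : forall k, F (D k)) by (intros [|[|k]]; simpl; auto using measurable_False).
  assert (HDdisj : forall k l w, k <> l -> D k w -> D l w -> False)
    by (intros [|[|k]] [|[|l]] w Hkl; simpl; try tauto; try lia; eauto).
  pose proof (Hadd D HD HDdisj) as Hsum.
  rewrite (prob_ext (fun w => exists k, D k w) (fun w => E w \/ E' w)) in Hsum.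
  2:{ intros w; split.
      - intros [[|[|k]] Hk]; simpl in Hk; tauto.
      - intros [Hw|Hw]; [exists 0%nat | exists 1%nat]; auto. }
  apply (UL_sequence _ _ _ Hsum), (Un_cv_eventually_eq _ _ 1).
  intros n Hn; induction Hn as [|n Hn IH]; [simpl; ring|].
  simpl sum_f_R0 in *; rewrite IH.
  destruct n as [|n]; [lia|]; simpl; rewrite prob_False; ring.
Qed.

Lemma prob_not (E : Omega -> Prop) : F E -> P (fun w => ~ E w) = 1 - P E.
Proof.
  intros HE.
  pose proof (prob_or_disjoint E (fun w => ~ E w) HE (measurable_not _ HE) (fun w a b => b a))
    as Hsplit.
  rewrite (prob_ext _ (fun _ => True)) in Hsplit by (intros w; split; auto; intros; apply classic).
  destruct HP as [_ [Htrue _]]; lra.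
Qed.

Lemma prob_mono (E E' : Omega -> Prop) :
  F E -> F E' -> (forall w, E w -> E' w) -> P E <= P E'.
Proof.
  intros HE HE' Hsub.
  assert (Hdiff : F (fun w => E' w /\ ~ E w)) by (apply measurable_and, measurable_not; auto).
  pose proof (prob_or_disjoint E _ HE Hdiff (fun w a b => proj2 b a)) as Hsplit.
  rewrite (prob_ext _ E') in Hsplit by (intros w; split; [firstorder | intros; tauto]).
  destruct HP as [Hpos _]; pose proof (Hpos _ Hdiff); lra.
Qed.

(* A union of countably many null events is null: split it into the disjoint
   events "the first failure is at [k]". *)
Lemma almost_surely_forall_nat (Q : nat -> Omega -> Prop) :
  (forall k, almost_surely F P (Q k)) -> almost_surely F P (fun w => forall k, Q k w).
Proof.
  intros HQ.
  destruct (choice _ HQ) as [E HE].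
  assert (HEm : forall k, F (E k)) by apply HE.
  set (first_miss := fun k w => ~ E k w /\ forall j, (j < k)%nat -> E j w).
  assert (Hm : forall k, F (first_miss k))
    by (intros k; apply measurable_and; auto using measurable_not, measurable_forall_lt).
  assert (Hdisj : forall k l w, k <> l -> first_miss k w -> first_miss l w -> False).
  { intros k l w Hkl [Hk Hltk] [Hl Hltl].
    destruct (Nat.lt_ge_cases k l); [apply Hk, Hltl | apply Hl, Hltk]; lia. }
  assert (Hnull : forall k, P (first_miss k) = 0).
  { intros k.
    pose proof (prob_mono _ _ (Hm k) (measurable_not _ (HEm k)) (fun w h => proj1 h)) as Hle.
    rewrite prob_not, (proj1 (proj2 (HE k))) in Hle by auto.
    destruct HP as [Hpos _]; pose proof (Hpos _ (Hm k)); lra. }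
  assert (Hunion : forall w, (exists k, first_miss k w) <-> exists k, ~ E k w).
  { intros w; split; [intros [k [Hk _]]; eauto|].
    intros [k Hk]; induction k as [k IH] using (well_founded_induction Wf_nat.lt_wf).
    destruct (classic (forall j, (j < k)%nat -> E j w)) as [Hlt|Hlt].
    - exists k; split; auto.
    - apply not_all_ex_not in Hlt; destruct Hlt as [j Hj].
      apply imply_to_and in Hj; destruct Hj; apply (IH j); auto. }
  assert (Hmiss : P (fun w => exists k, ~ E k w) = 0).
  { destruct HP as [_ [_ Hadd]].
    rewrite <- (prob_ext _ _ Hunion).
    apply (UL_sequence _ _ _ (Hadd _ Hm Hdisj)), (Un_cv_eventually_eq _ _ 0).
    intros n _; induction n; simpl; rewrite ?IHn, Hnull; ring. }
  assert (Hall : forall w, (forall k, E k w) <-> ~ exists k, ~ E k w).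
  { intros w; split; [intros H [k Hk]; auto | intros H k; apply NNPP; eauto]. }
  assert (Hmiss_m : F (fun w => exists k, ~ E k w))
    by (apply HF; intros k; apply measurable_not; auto).
  exists (fun w => forall k, E k w); repeat split.
  - apply (measurable_ext _ _ (measurable_not _ Hmiss_m)); firstorder.
  - rewrite (prob_ext _ _ Hall), prob_not, Hmiss by auto; ring.
  - intros w Hw k; apply (HE k), Hw.
Qed.

Lemma almost_surely_and (Q Q' : Omega -> Prop) :
  almost_surely F P Q -> almost_surely F P Q' -> almost_surely F P (fun w => Q w /\ Q' w).
Proof.
  intros H H'.
  destruct (almost_surely_forall_nat (fun k => if Nat.eqb k 0 then Q else Q'))
    as [E [HEm [HE Hsub]]]; [intros [|k]; auto|].
  exists E; split; [|split]; auto.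
  intros w Hw; split; [apply (Hsub w Hw 0%nat) | apply (Hsub w Hw 1%nat)].
Qed.

Lemma almost_surely_inhabited (Q : Omega -> Prop) :
  almost_surely F P Q -> exists w, Q w.
Proof.
  intros [E [_ [HE Hsub]]].
  destruct (classic (exists w, E w)) as [[w Hw]|Hempty]; eauto.
  rewrite (prob_ext E (fun _ => False)), prob_False in HE by firstorder; lra.
Qed.

End Probability.

Lemma list_max_in (l : list R) : l <> [] -> In (list_max l) l.
Proof.
  destruct l as [|h t]; [congruence|]; intros _; simpl.
  induction t as [|a t IH]; simpl; auto.
  destruct (Rle_dec a (fold_right Rmax h t));
    [rewrite Rmax_right by lra | rewrite Rmax_left by lra]; simpl in *; tauto.
Qed.

Lemma list_max_ge (l : list R) (z : R) : In z l -> z <= list_max l.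
Proof.
  destruct l as [|h t]; [intros []|]; simpl.
  induction t as [|a t IH]; simpl; [intros [->|[]]; lra|].
  pose proof (Rmax_l a (fold_right Rmax h t)); pose proof (Rmax_r a (fold_right Rmax h t)).
  intros [<-|[<-|Hz]]; try lra; pose proof (IH (or_intror Hz)); lra.
Qed.

Lemma list_min_in (l : list R) : l <> [] -> In (list_min l) l.
Proof.
  destruct l as [|h t]; [congruence|]; intros _; simpl.
  induction t as [|a t IH]; simpl; auto.
  destruct (Rle_dec a (fold_right Rmin h t));
    [rewrite Rmin_left by lra | rewrite Rmin_right by lra]; simpl in *; tauto.
Qed.

Lemma sublists_nil {T : Type} (l : list T) : In [] (sublists l).
Proof. induction l; simpl; auto using in_or_app. Qed.

Lemma alignments_nil (n : nat) : In [] (alignments n).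
Proof. apply filter_In; split; [apply sublists_nil | reflexivity]. Qed.

Lemma sumR_map_lin {T : Type} (l : list T) (f0 f1 f2 : T -> R) (c1 c2 : R) :
  (forall z, f0 z = c1 * f1 z + c2 * f2 z) ->
  sumR (map f0 l) = c1 * sumR (map f1 l) + c2 * sumR (map f2 l).
Proof. intros H; induction l; simpl; [ring|]; rewrite IHl, H; ring. Qed.

Lemma score_lin {A : Type} (R0 R1 R2 : scoring A) (c1 c2 : R) n x y nu :
  (forall u v, R0 u v = c1 * R1 u v + c2 * R2 u v) ->
  score R0 n x y nu = c1 * score R1 n x y nu + c2 * score R2 n x y nu.
Proof.
  intros H; unfold score.
  rewrite (sumR_map_lin nu _ (fun ij => R1 (Some (x (fst ij))) (Some (y (snd ij))))
             (fun ij => R2 (Some (x (fst ij))) (Some (y (snd ij)))) c1 c2) by auto.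
  rewrite (sumR_map_lin (seq 1 n) _
             (fun i => if existsb (Nat.eqb i) (map fst nu) then 0 else R1 (Some (x i)) None)
             (fun i => if existsb (Nat.eqb i) (map fst nu) then 0 else R2 (Some (x i)) None)
             c1 c2) by (intros i; destruct existsb; [ring | apply H]).
  rewrite (sumR_map_lin (seq 1 n)
             (fun j => if existsb (Nat.eqb j) (map snd nu) then 0 else R0 None (Some (y j)))
             (fun j => if existsb (Nat.eqb j) (map snd nu) then 0 else R1 None (Some (y j)))
             (fun j => if existsb (Nat.eqb j) (map snd nu) then 0 else R2 None (Some (y j)))
             c1 c2) by (intros j; destruct existsb; [ring | apply H]).
  ring.
Qed.

Definition comb {A : Type} (a : R) (R1 : scoring A) (b : R) (R2 : scoring A) : scoring A :=
  fun u v => a * R1 u v + b * R2 u v.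

Section Alignments.

Context {A : Type} (n : nat) (x y : nat -> A).

Lemma L_opt_ge (Rs : scoring A) (nu : alignment) :
  In nu (alignments n) -> score Rs n x y nu <= L_opt Rs n x y.
Proof. intros H; apply list_max_ge, in_map, H. Qed.

Lemma L_opt_attained (Rs : scoring A) :
  exists nu, In nu (alignments n) /\ score Rs n x y nu = L_opt Rs n x y.
Proof.
  assert (Hne : map (score Rs n x y) (alignments n) <> []).
  { intros He; apply map_eq_nil in He; pose proof (alignments_nil n) as H0.
    rewrite He in H0; destruct H0. }
  apply list_max_in, in_map_iff in Hne; destruct Hne as [nu [Hsc Hin]]; eauto.
Qed.

Lemma opt_alignments_spec (Rs : scoring A) (pi : alignment) :
  In pi (opt_alignments Rs n x y) <->
  In pi (alignments n) /\ score Rs n x y pi = L_opt Rs n x y.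
Proof.
  unfold opt_alignments; rewrite filter_In.
  destruct Req_EM_T; split; intros [H1 H2]; auto; congruence.
Qed.

Lemma opt_alignments_nonempty (Rs : scoring A) : opt_alignments Rs n x y <> [].
Proof.
  destruct (L_opt_attained Rs) as [nu Hnu]; intros He.
  apply opt_alignments_spec in Hnu; rewrite He in Hnu; destruct Hnu.
Qed.

Lemma max_T_over_opt_attained (S T : scoring A) :
  exists pi, In pi (opt_alignments S n x y) /\
             max_T_over_opt S T n x y = score T n x y pi / INR n.
Proof.
  assert (Hin : In (max_T_over_opt S T n x y)
                   (map (fun pi => score T n x y pi / INR n) (opt_alignments S n x y))).
  { apply list_max_in; intros He; apply map_eq_nil in He.
    apply (opt_alignments_nonempty S He). }
  apply in_map_iff in Hin; destruct Hin as [pi [Hpi Hin]]; eauto.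
Qed.

Lemma min_T_over_opt_attained (S T : scoring A) :
  exists pi, In pi (opt_alignments S n x y) /\
             min_T_over_opt S T n x y = score T n x y pi / INR n.
Proof.
  assert (Hin : In (min_T_over_opt S T n x y)
                   (map (fun pi => score T n x y pi / INR n) (opt_alignments S n x y))).
  { apply list_min_in; intros He; apply map_eq_nil in He.
    apply (opt_alignments_nonempty S He). }
  apply in_map_iff in Hin; destruct Hin as [pi [Hpi Hin]]; eauto.
Qed.

(* An [S]-optimal alignment is admissible for the tilted scorings [S +- d T]. *)
Lemma opt_score_sandwich (S T : scoring A) (pi : alignment) (d : R) :
  In pi (opt_alignments S n x y) ->
  L_opt S n x y - L_opt (comb 1 S (- d) T) n x y <= d * score T n x y pi
  <= L_opt (comb 1 S d T) n x y - L_opt S n x y.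
Proof.
  intros [Hin Hopt]%opt_alignments_spec.
  pose proof (L_opt_ge (comb 1 S d T) pi Hin) as Hup.
  pose proof (L_opt_ge (comb 1 S (- d) T) pi Hin) as Hlo.
  rewrite (score_lin _ S T 1 d) in Hup by reflexivity.
  rewrite (score_lin _ S T 1 (- d)) in Hlo by reflexivity.
  lra.
Qed.

End Alignments.

Lemma comb_symmetric {A : Type} (a b : R) (R1 R2 : scoring A) :
  symmetric_scoring R1 -> symmetric_scoring R2 -> symmetric_scoring (comb a R1 b R2).
Proof.
  intros [Hsym1 HG1] [Hsym2 HG2]; split; unfold comb.
  - intros u v; rewrite Hsym1, Hsym2; auto.
  - rewrite HG1, HG2; ring.
Qed.

Lemma comb_1_0 {A : Type} (R1 R2 : scoring A) : comb 1 R1 0 R2 = R1.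
Proof.
  unfold comb; apply functional_extensionality; intros u;
  apply functional_extensionality; intros v; ring.
Qed.

Definition convex (g : R -> R) : Prop :=
  forall s t mu, 0 <= mu <= 1 -> g (mu * s + (1 - mu) * t) <= mu * g s + (1 - mu) * g t.

Definition subgradient_at_0 (g : R -> R) (D : R) : Prop := forall t, g 0 + t * D <= g t.

Definition inv_succ (k : nat) : R := / INR (S k).

Lemma inv_succ_pos (k : nat) : 0 < inv_succ k.
Proof. apply Rinv_0_lt_compat, lt_0_INR; lia. Qed.

Lemma inv_succ_decreasing (k : nat) : inv_succ (S k) <= inv_succ k.
Proof. apply Rinv_le_contravar; [apply lt_0_INR; lia | apply le_INR; lia]. Qed.

Section Convexity.

Variable g : R -> R.
Hypothesis g_convex : convex g.

Lemma convex_slope_mono (s t : R) :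
  0 < s -> s <= t -> (g s - g 0) / s <= (g t - g 0) / t.
Proof.
  intros Hs Hst.
  assert (Hmu : 0 <= s / t <= 1).
  { split; [apply Rlt_le, Rdiv_lt_0_compat; lra|].
    apply Rmult_le_reg_r with t; [lra|]; unfold Rdiv; rewrite Rmult_assoc, Rinv_l; lra. }
  pose proof (g_convex t 0 (s / t) Hmu) as H.
  replace (s / t * t + (1 - s / t) * 0) with s in H by (field; lra).
  apply Rmult_le_reg_r with (s * t); [apply Rmult_lt_0_compat; lra|].
  replace ((g s - g 0) / s * (s * t)) with ((g s - g 0) * t) by (field; lra).
  replace ((g t - g 0) / t * (s * t)) with (s / t * (g t - g 0) * t) by (field; lra).
  apply Rmult_le_compat_r; lra.
Qed.

Lemma convex_slope_left_le_right (s t : R) :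
  t < 0 -> 0 < s -> (g 0 - g t) / (- t) <= (g s - g 0) / s.
Proof.
  intros Ht Hs.
  assert (Hmu : 0 <= s / (s - t) <= 1).
  { split; [apply Rlt_le, Rdiv_lt_0_compat; lra|].
    apply Rmult_le_reg_r with (s - t); [lra|].
    unfold Rdiv; rewrite Rmult_assoc, Rinv_l; lra. }
  pose proof (g_convex t s (s / (s - t)) Hmu) as H.
  replace (s / (s - t) * t + (1 - s / (s - t)) * s) with 0 in H by (field; lra).
  replace (1 - s / (s - t)) with (- t / (s - t)) in H by (field; lra).
  apply Rmult_le_compat_r with (r := s - t) in H; [|lra].
  replace ((s / (s - t) * g t + - t / (s - t) * g s) * (s - t)) with (s * g t - t * g s)
    in H by (field; lra).
  apply Rmult_le_reg_r with (s * - t); [apply Rmult_lt_0_compat; lra|].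
  replace ((g 0 - g t) / - t * (s * - t)) with (s * (g 0 - g t)) by (field; lra).
  replace ((g s - g 0) / s * (s * - t)) with (- t * (g s - g 0)) by (field; lra).
  lra.
Qed.

(* The right difference quotients decrease and are bounded below, and their
   limit is a subgradient at [0]. *)
Lemma convex_right_slopes_cv (y0 : R) :
  (forall D, subgradient_at_0 g D -> D = y0) ->
  Un_cv (fun k => (g (inv_succ k) - g 0) / inv_succ k) y0.
Proof.
  intros Huniq.
  set (q := fun k => (g (inv_succ k) - g 0) / inv_succ k).
  assert (Hdec : Un_decreasing q)
    by (intros k; apply convex_slope_mono; auto using inv_succ_pos, inv_succ_decreasing).
  assert (Hlb : forall k, (g 0 - g (-1)) / (- -1) <= q k)
    by (intros k; apply convex_slope_left_le_right; auto using inv_succ_pos; lra).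
  destruct (decreasing_cv q Hdec) as [D HD].
  { exists (- ((g 0 - g (-1)) / (- -1))); intros r [i ->]; unfold opp_seq.
    specialize (Hlb i); lra. }
  replace y0 with D; auto; apply Huniq; intros t.
  destruct (Rtotal_order t 0) as [Ht|[->|Ht]]; [| lra |].
  - assert (HL : (g 0 - g t) / (- t) <= D).
    { apply Rle_cv_lim with (Un := fun _ => (g 0 - g t) / (- t)) (Vn := q);
      auto using Un_cv_const.
      intros k; apply convex_slope_left_le_right; auto using inv_succ_pos. }
    apply Rmult_le_compat_l with (r := - t) in HL; [|lra].
    replace (- t * ((g 0 - g t) / - t)) with (g 0 - g t) in HL by (field; lra); lra.
  - destruct (archimed_cor1 t Ht) as [[|N] [HN HNpos]]; [lia|].
    assert (HDt : D <= (g t - g 0) / t).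
    { apply Rle_trans with (q N); [apply (decreasing_ineq q D Hdec HD)|].
      apply convex_slope_mono; auto using inv_succ_pos; unfold inv_succ; lra. }
    apply Rmult_le_compat_l with (r := t) in HDt; [|lra].
    replace (t * ((g t - g 0) / t)) with (g t - g 0) in HDt by (field; lra); lra.
Qed.

End Convexity.

Lemma convex_left_slopes_cv (g : R -> R) (y0 : R) :
  convex g -> (forall D, subgradient_at_0 g D -> D = y0) ->
  Un_cv (fun k => (g 0 - g (- inv_succ k)) / inv_succ k) y0.
Proof.
  intros Hg Huniq.
  assert (Hrefl : Un_cv (fun k => (g (- inv_succ k) - g (- 0)) / inv_succ k) (- y0)).
  { apply (convex_right_slopes_cv (fun t => g (- t))).
    - intros s t mu Hmu.
      replace (- (mu * s + (1 - mu) * t)) with (mu * - s + (1 - mu) * - t) by ring; auto.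
    - intros D HD; enough (- D = y0) by lra; apply Huniq; intros t.
      specialize (HD (- t)); simpl in HD; rewrite Ropp_0, Ropp_involutive in HD.
      replace (t * - D) with (- t * D) by ring; exact HD. }
  rewrite Ropp_0 in Hrefl; apply CV_opp in Hrefl; rewrite Ropp_involutive in Hrefl.
  intros e He; destruct (Hrefl e He) as [N HN]; exists N; intros n Hn.
  specialize (HN n Hn); unfold opp_seq in HN.
  replace ((g 0 - g (- inv_succ n)) / inv_succ n)
    with (- ((g (- inv_succ n) - g 0) / inv_succ n)) by (field; apply Rgt_not_eq, inv_succ_pos).
  exact HN.
Qed.

(* Rocq's [/ 0] is [0], so bounds divided by [INR n] also hold at [n = 0]. *)
Lemma Rinv_INR_nonneg (n : nat) : 0 <= / INR n.
Proof.
  destruct n as [|n]; [simpl; rewrite Rinv_0; lra|].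
  left; apply Rinv_0_lt_compat, lt_0_INR; lia.
Qed.

Lemma Rdiv_INR_le (a b : R) (n : nat) : a <= b -> a / INR n <= b / INR n.
Proof. intros; apply Rmult_le_compat_r; auto using Rinv_INR_nonneg. Qed.

Lemma Rdiv_le_of_le_mul (a b d : R) : 0 < d -> a <= d * b -> a / d <= b.
Proof.
  intros Hd H; replace b with (d * b / d) by (field; lra).
  apply Rmult_le_compat_r; auto; left; apply Rinv_0_lt_compat; auto.
Qed.

Lemma Rle_div_of_mul_le (a b d : R) : 0 < d -> d * b <= a -> b <= a / d.
Proof.
  intros Hd H; replace b with (d * b / d) by (field; lra).
  apply Rmult_le_compat_r; auto; left; apply Rinv_0_lt_compat; auto.
Qed.

Lemma Un_cv_squeeze_family (u : nat -> R) (lo hi : nat -> nat -> R)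
    (lo_lim hi_lim : nat -> R) (l : R) :
  (forall k n, lo k n <= u n <= hi k n) ->
  (forall k, Un_cv (lo k) (lo_lim k)) -> (forall k, Un_cv (hi k) (hi_lim k)) ->
  Un_cv lo_lim l -> Un_cv hi_lim l -> Un_cv u l.
Proof.
  intros Hbd Hlo Hhi Hlol Hhil e He.
  destruct (Hlol (e / 2)) as [K1 HK1]; [lra|].
  destruct (Hhil (e / 2)) as [K2 HK2]; [lra|].
  specialize (HK1 (K1 + K2)%nat ltac:(lia)); specialize (HK2 (K1 + K2)%nat ltac:(lia)).
  destruct (Hlo (K1 + K2)%nat (e / 2)) as [N1 HN1]; [lra|].
  destruct (Hhi (K1 + K2)%nat (e / 2)) as [N2 HN2]; [lra|].
  exists (N1 + N2)%nat; intros n Hn.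
  specialize (HN1 n ltac:(lia)); specialize (HN2 n ltac:(lia)).
  specialize (Hbd (K1 + K2)%nat n).
  unfold Rdist in *.
  apply Rabs_def2 in HK1; apply Rabs_def2 in HK2;
  apply Rabs_def2 in HN1; apply Rabs_def2 in HN2.
  apply Rabs_def1; lra.
Qed.

Section Lambda.

Context {A Omega : Type} (F : (Omega -> Prop) -> Prop) (P : (Omega -> Prop) -> R)
  (X Y : nat -> Omega -> A) (lam : scoring A -> R).
Hypotheses (HF : sigma_algebra F) (HP : probability_measure F P)
  (Hlam : is_lambda F P X Y lam).

(* Evaluate the three a.s. limits along one common realisation. *)
Lemma lambda_sublinear (R0 R1 R2 : scoring A) (c1 c2 : R) :
  symmetric_scoring R0 -> symmetric_scoring R1 -> symmetric_scoring R2 ->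
  0 <= c1 -> 0 <= c2 -> (forall u v, R0 u v = c1 * R1 u v + c2 * R2 u v) ->
  lam R0 <= c1 * lam R1 + c2 * lam R2.
Proof.
  intros HR0 HR1 HR2 Hc1 Hc2 Hlin.
  destruct (almost_surely_inhabited F P HF HP _
              (almost_surely_and F P HF HP _ _ (Hlam R0 HR0)
                 (almost_surely_and F P HF HP _ _ (Hlam R1 HR1) (Hlam R2 HR2))))
    as [w [C0 [C1 C2]]].
  set (xs := fun i => X i w) in *; set (ys := fun i => Y i w) in *.
  apply Rle_cv_lim with (Un := fun n => L_opt R0 n xs ys / INR n)
    (Vn := fun n => c1 * (L_opt R1 n xs ys / INR n) + c2 * (L_opt R2 n xs ys / INR n));
    auto.
  - intros n; destruct (L_opt_attained n xs ys R0) as [nu [Hin <-]].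
    replace (c1 * (L_opt R1 n xs ys / INR n) + c2 * (L_opt R2 n xs ys / INR n))
      with ((c1 * L_opt R1 n xs ys + c2 * L_opt R2 n xs ys) / INR n)
      by (unfold Rdiv; ring).
    apply Rdiv_INR_le; rewrite (score_lin R0 R1 R2 c1 c2) by auto.
    apply Rplus_le_compat; apply Rmult_le_compat_l; auto using L_opt_ge.
  - apply CV_plus; apply CV_mult; auto using Un_cv_const.
Qed.

Variables (S T : scoring A).
Hypotheses (HS : symmetric_scoring S) (HT : symmetric_scoring T).

Lemma lambda_comb_sublinear (a0 b0 a1 b1 a2 b2 c1 c2 : R) :
  0 <= c1 -> 0 <= c2 -> a0 = c1 * a1 + c2 * a2 -> b0 = c1 * b1 + c2 * b2 ->
  lam (comb a0 S b0 T) <= c1 * lam (comb a1 S b1 T) + c2 * lam (comb a2 S b2 T).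
Proof.
  intros Hc1 Hc2 Ha Hb.
  apply lambda_sublinear; auto using comb_symmetric.
  intros u v; unfold comb; subst; ring.
Qed.

Lemma lambda_tilt_convex : convex (fun t => lam (comb 1 S t T)).
Proof. intros s t mu Hmu; apply lambda_comb_sublinear; lra. Qed.

(* A supporting line [x + t D] of [t |-> lam (S + t T)] at [0] is a point of
   [SET S T]: the homogeneity of [lam] reduces every direction [(a, b)] to
   [a = 1] or [a <= 0]. *)
Lemma SET_of_subgradient (D : R) :
  subgradient_at_0 (fun t => lam (comb 1 S t T)) D -> SET lam S T (lam (comb 1 S 0 T)) D.
Proof.
  intros HD a b; change (a * lam (comb 1 S 0 T) + b * D <= lam (comb a S b T)).
  destruct (Rle_dec a 0) as [Ha|Ha].
  - assert (E0 : lam (comb 1 S b T) <= 1 * lam (comb 1 S 0 T) + 1 * lam (comb 0 S b T))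
      by (apply lambda_comb_sublinear; lra).
    assert (E1 : lam (comb 0 S b T) <= 1 * lam (comb a S b T) + 1 * lam (comb (- a) S 0 T))
      by (apply lambda_comb_sublinear; lra).
    assert (E2 : lam (comb (- a) S 0 T) <= - a * lam (comb 1 S 0 T) + 0 * lam (comb 0 S 0 T))
      by (apply lambda_comb_sublinear; lra).
    specialize (HD b); simpl in HD; lra.
  - assert (E : lam (comb 1 S (b / a) T) <= / a * lam (comb a S b T) + 0 * lam (comb 0 S 0 T))
      by (apply lambda_comb_sublinear; [left; apply Rinv_0_lt_compat | | field | field]; lra).
    specialize (HD (b / a)); simpl in HD.
    apply Rmult_le_compat_l with (r := a) in HD; [|lra].
    apply Rmult_le_compat_l with (r := a) in E; [|lra].
    replace (a * (lam (comb 1 S 0 T) + b / a * D)) with (a * lam (comb 1 S 0 T) + b * D)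
      in HD by (field; lra).
    replace (a * (/ a * lam (comb a S b T) + 0 * lam (comb 0 S 0 T)))
      with (lam (comb a S b T)) in E by (field; lra).
    lra.
Qed.

End Lambda.

Lemma opt_T_score_cv {A : Type} (S T : scoring A) (x y : nat -> A) (g : R -> R)
    (y0 : R) (v : nat -> R) :
  (forall n, exists pi, In pi (opt_alignments S n x y) /\ v n = score T n x y pi / INR n) ->
  Un_cv (fun n => L_opt S n x y / INR n) (g 0) ->
  (forall k, Un_cv (fun n => L_opt (comb 1 S (inv_succ k) T) n x y / INR n)
                   (g (inv_succ k))) ->
  (forall k, Un_cv (fun n => L_opt (comb 1 S (- inv_succ k) T) n x y / INR n)
                   (g (- inv_succ k))) ->
  Un_cv (fun k => (g 0 - g (- inv_succ k)) / inv_succ k) y0 ->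
  Un_cv (fun k => (g (inv_succ k) - g 0) / inv_succ k) y0 ->
  Un_cv v y0.
Proof.
  intros Hv H0 Hplus Hminus Hleft Hright.
  apply (Un_cv_squeeze_family v
    (fun k n => (L_opt S n x y / INR n
                 - L_opt (comb 1 S (- inv_succ k) T) n x y / INR n) / inv_succ k)
    (fun k n => (L_opt (comb 1 S (inv_succ k) T) n x y / INR n
                 - L_opt S n x y / INR n) / inv_succ k)
    (fun k => (g 0 - g (- inv_succ k)) / inv_succ k)
    (fun k => (g (inv_succ k) - g 0) / inv_succ k) y0); auto.
  - intros k n; destruct (Hv n) as [pi [Hpi ->]].
    destruct (opt_score_sandwich n x y S T pi (inv_succ k) Hpi) as [Hlo Hhi].
    pose proof (inv_succ_pos k) as Hd.
    unfold Rdiv; rewrite <- !Rmult_minus_distr_r.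
    rewrite !(Rmult_comm _ (/ INR n)), !Rmult_assoc.
    split; apply Rmult_le_compat_l; auto using Rinv_INR_nonneg;
      [apply Rdiv_le_of_le_mul | apply Rle_div_of_mul_le]; auto.
  - intros k; apply CV_mult; [apply CV_minus|]; auto using Un_cv_const.
  - intros k; apply CV_mult; [apply CV_minus|]; auto using Un_cv_const.
Qed.

Theorem mainTheorem9
  (A : Type) (enumA : list A) (HA : finite_alphabet enumA)
  (p : A -> R) (Hp : distribution enumA p)
  (Omega : Type) (F : (Omega -> Prop) -> Prop) (P : (Omega -> Prop) -> R)
  (HF : sigma_algebra F) (HP : probability_measure F P)
  (X Y : nat -> Omega -> A) (Hiid : iid_letters F P p X Y)
  (lam : scoring A -> R) (Hlam : is_lambda F P X Y lam)
  (S T : scoring A) (HS : symmetric_scoring S) (HT : symmetric_scoring T)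
  (x0 y0 : R)
  (Hmax : SET lam S T x0 y0 /\
          (forall x y, SET lam S T x y -> x <= x0 /\ (x = x0 -> y = y0))) :
  almost_surely F P (fun w =>
    Un_cv (fun n => max_T_over_opt S T n (fun i => X i w) (fun i => Y i w)) y0 /\
    Un_cv (fun n => min_T_over_opt S T n (fun i => X i w) (fun i => Y i w)) y0).
Proof.
  destruct Hmax as [Hx0y0 Hmaximal].
  set (g := fun t => lam (comb 1 S t T)).
  assert (Hg : convex g) by apply (lambda_tilt_convex F P X Y lam HF HP Hlam S T HS HT).
  assert (Huniq : forall D, subgradient_at_0 g D -> D = y0).
  { intros D HD.
    destruct (Hmaximal _ _ (SET_of_subgradient F P X Y lam HF HP Hlam S T HS HT D HD))
      as [Hle Heq].
    apply Heq; specialize (Hx0y0 1 0); change (1 * x0 + 0 * y0 <= lam (comb 1 S 0 T)) in Hx0y0; lra. }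
  assert (Hcomb : forall k, symmetric_scoring (comb 1 S k T)) by auto using comb_symmetric.
  destruct (almost_surely_and F P HF HP _ _ (Hlam S HS)
              (almost_surely_forall_nat F P HF HP _ (fun k =>
                 almost_surely_and F P HF HP _ _ (Hlam _ (Hcomb (inv_succ k)))
                                                 (Hlam _ (Hcomb (- inv_succ k))))))
    as [E [HEm [HE1 HE]]].
  exists E; split; [|split]; auto; intros w Hw.
  destruct (HE w Hw) as [HL0 HLk].
  assert (Hg0 : g 0 = lam S) by (unfold g; rewrite comb_1_0; auto).
  rewrite <- Hg0 in HL0.
  split; (eapply opt_T_score_cv; [| exact HL0 | apply HLk | apply HLk
                                  | apply convex_left_slopes_cv | apply convex_right_slopes_cv];
          auto).
  - intros n; apply max_T_over_opt_attained.
  - intros n; apply min_T_over_opt_attained.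
Qed.
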